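(* Let $S$ be a finitely generated completely simple semigroup with maximal subgroups isomorphic to a group $G$. Let $\tau : Y^+ \to S$ be a finite semigroup choice of generators for $S$ and $\sigma : X^* \to G$ a finite monoid choice of generators for $G$, and let $W = \{u \in X^* : u\sigma = 1\}$ be the word problem of $G$. Then there is a rational transduction $\rho \subseteq X^* \times \hat{Y}^*$ such that $L_\tau(S)$ is the Kleene closure $(W\rho)^*$.
   Context: Maps are written on the right. $X^*$, $X^+$: free monoid and free semigroup on $X$. A semigroup is completely simple if it has no proper ideals and has a primitive idempotent (idempotent $e$ such that every idempotent $f$ with $ef = fe = f$ equals $e$); maximal subgroups are subsemigroups that are groups under the inherited multiplication and contained in no larger such. For a monoid $M$ and surjective morphism $\sigma : Y^* \to M$, let $\overline{Y} = \{\overline{y} : y \in Y\}$ be new symbols, $\hat{Y} = Y \cup \overline{Y}$; the loop automaton has vertex set $M$, for each $a \in M$, $y \in Y$ an edge $a \to a(y\sigma)$ labelled $y$ and an edge $a(y\sigma) \to a$ labelled $\overline{y}$; the loop problem is the set of labels of paths from the identity to the identity. For a semigroup $S$ and surjective $\tau : Y^+ \to S$, $L_\tau(S)$ is the loop problem of $S^1$ ($S$ with a new identity adjoined even if one exists) with respect to the extension $\tau^1 : Y^* \to S^1$. A finite transducer from $X$ to $Z$ is a finite directed graph with edges labelled by elements of $X^* \times Z^*$, an initial vertex and terminal vertices; the relation it accepts is the set of labels (componentwise concatenations) of paths from initial to terminal vertices; such relations are rational transductions. For $\rho \subseteq X^* \times Z^*$ and $L \subseteq X^*$, $L\rho = \{v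 : (u,v) \in \rho \text{ for some } u \in L\}$. The Kleene closure $K^*$ of a language $K$ is the submonoid of the free monoid generated by $K$. *)

From mathcomp Require Import all_boot.
From Stdlib Require Lists.List.
Set Implicit Arguments. Unset Strict Implicit. Unset Printing Implicit Defensive.

Definition associative_op (S : Type) (mul : S -> S -> S) : Prop :=
  forall a b c, mul a (mul b c) = mul (mul a b) c.

Definition is_ideal (S : Type) (mul : S -> S -> S) (I : S -> Prop) : Prop :=
  (exists x, I x) /\ forall s x, I x -> I (mul s x) /\ I (mul x s).

Definition sg_simple (S : Type) (mul : S -> S -> S) : Prop :=
  forall I, is_ideal mul I -> forall x, I x.

Definition idempotent (S : Type) (mul : S -> S -> S) (e : S) : Prop := mul e e = e.

Definition primitive_idempotent (S : Type) (mul : S -> S -> S) (e : S) : Prop :=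
  idempotent mul e /\
  forall f, idempotent mul f -> mul e f = f -> mul f e = f -> f = e.

Definition completely_simple (S : Type) (mul : S -> S -> S) : Prop :=
  sg_simple mul /\ exists e, primitive_idempotent mul e.

Definition is_subgroup (S : Type) (mul : S -> S -> S) (H : S -> Prop) : Prop :=
  (forall a b, H a -> H b -> H (mul a b)) /\
  exists e, H e /\ (forall h, H h -> mul e h = h /\ mul h e = h) /\
    (forall h, H h -> exists h', H h' /\ mul h h' = e /\ mul h' h = e).

Definition maximal_subgroup (S : Type) (mul : S -> S -> S) (H : S -> Prop) : Prop :=
  is_subgroup mul H /\
  forall K, is_subgroup mul K -> (forall x, H x -> K x) -> forall x, K x -> H x.

Record is_group (G : Type) (mul : G -> G -> G) (one : G) (inv : G -> G) : Prop := {
  grp_assoc : associative_op mul;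
  grp_mul1 : forall g, mul one g = g;
  grp_mulg1 : forall g, mul g one = g;
  grp_mulV : forall g, mul (inv g) g = one;
  grp_mulgV : forall g, mul g (inv g) = one }.

Definition subgroup_iso (S G : Type) (mulS : S -> S -> S) (mulG : G -> G -> G)
    (H : S -> Prop) : Prop :=
  exists phi : G -> S,
    (forall g, H (phi g)) /\ (forall h, H h -> exists g, phi g = h) /\
    injective phi /\ (forall a b, phi (mulG a b) = mulS (phi a) (phi b)).

Definition meval (X M : Type) (mul : M -> M -> M) (one : M) (g : X -> M)
    (w : seq X) : M := foldl (fun a x => mul a (g x)) one w.

(* semigroup morphism Y^+ -> S on the nonempty word y :: w *)
Definition seval (Y S : Type) (mul : S -> S -> S) (g : Y -> S) (y : Y)
    (w : seq Y) : S := foldl (fun a x => mul a (g x)) (g y) w.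

(* hat Y = Y + Y : inl y is y, inr y is \overline{y} *)
Inductive lpath (M Y : Type) (mul : M -> M -> M) (g : Y -> M) :
    M -> seq (Y + Y) -> M -> Prop :=
| lp_nil a : lpath mul g a [::] a
| lp_fwd a y w b : lpath mul g (mul a (g y)) w b -> lpath mul g a (inl y :: w) b
| lp_bwd a y w b : lpath mul g a w b -> lpath mul g (mul a (g y)) (inr y :: w) b.

Definition loop_problem (M Y : Type) (mul : M -> M -> M) (one : M) (g : Y -> M)
    (w : seq (Y + Y)) : Prop := lpath mul g one w one.

(* S^1 : S with a new identity None adjoined *)
Definition mul1 (S : Type) (mul : S -> S -> S) (a b : option S) : option S :=
  match a, b with
  | None, _ => b
  | _, None => a
  | Some x, Some y => Some (mul x y)
  end.

Definition L_tau (S Y : Type) (mul : S -> S -> S) (gen : Y -> S) : seq (Y + Y) -> Prop :=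
  loop_problem (mul1 mul) None (fun y => Some (gen y)).

Record transducer (X Z : Type) := Transducer {
  tr_state : finType;
  tr_init : tr_state;
  tr_final : tr_state -> bool;
  tr_edges : seq (tr_state * seq X * seq Z * tr_state) }.

Arguments tr_state {X Z} t.
Inductive taccept (X Z : Type) (T : transducer X Z) :
    tr_state T -> seq X -> seq Z -> Prop :=
| ta_final q : @tr_final X Z T q -> @taccept X Z T q [::] [::]
| ta_edge q u v q' u' v' :
    Stdlib.Lists.List.In (q, u, v, q') (@tr_edges X Z T) -> @taccept X Z T q' u' v' ->
    @taccept X Z T q (u ++ u') (v ++ v').

Definition rational_transduction (X Z : Type) (rho : seq X -> seq Z -> Prop) : Prop :=
  exists T : transducer X Z, forall u v, rho u v <-> @taccept X Z T (@tr_init X Z T) u v.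

Definition image_lang (X Z : Type) (L : seq X -> Prop) (rho : seq X -> seq Z -> Prop)
    (v : seq Z) : Prop := exists u, L u /\ rho u v.

Definition kleene (Z : Type) (K : seq Z -> Prop) (w : seq Z) : Prop :=
  exists ws : seq (seq Z), (forall x, Stdlib.Lists.List.In x ws -> K x) /\ w = flatten ws.

From mathcomp Require Import all_boot boolp.
Set Implicit Arguments. Unset Strict Implicit. Unset Printing Implicit Defensive.

(* Fix a primitive idempotent e. Then eSe is the maximal subgroup H_e, a copy
   of G, and every x in aS ∩ Sb has a coordinate h in H_e with
   x = a·a'·h·b, where a' is the inverse of eae in H_e (Rees coordinates).
   A loop at 1 in the loop automaton of S^1 leaves 1 by a letter a, stays in
   the R-class of a, and returns to 1 by a letter c with c in aS. A transducer
   remembering a and a generator b with the current element in Sb can track the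
   coordinate h: on each edge it reads a word of X^* for the factor by which h
   changes. Relabelling b by another generator of the same L-class is an
   edge with empty output. The loop closes exactly when the word read lies in
   W, and L_tau(S) consists of the concatenations of such loops. *)

Lemma In_mem (T : eqType) (x : T) (s : seq T) : List.In x s <-> x \in s.
Proof.
elim: s => [|y s IH] //=; rewrite in_cons; split.
- by case=> [->|/IH ->]; rewrite ?eqxx ?orbT.
- by case/orP=> [/eqP ->|/IH]; [left|right].
Qed.

Lemma meval_cat (X M : Type) (mul : M -> M -> M) (one : M) (gen : X -> M) :
    associative_op mul -> left_id one mul -> right_id one mul ->
  forall u v, meval mul one gen (u ++ v) = mul (meval mul one gen u) (meval mul one gen v).
Proof.
move=> mulA mul1m mulm1.
have foldlE a u : foldl (fun b x => mul b (gen x)) a u = mul a (meval mul one gen u).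
  elim: u a => [|x u IH] a /=; first by rewrite mulm1.
  by rewrite /meval /= mul1m !IH mulA.
by move=> u v; rewrite /meval foldl_cat foldlE.
Qed.

Lemma lpath_cat (M Y : Type) (mul : M -> M -> M) (g : Y -> M) a v b w c :
  lpath mul g a v b -> lpath mul g b w c -> lpath mul g a (v ++ w) c.
Proof.
elim=> {a v b} [a|a y v b _ IH|a y v b _ IH] Hw //=.
- by apply: lp_fwd; apply: IH.
- by apply: lp_bwd; apply: IH.
Qed.

Lemma kleene_cons (Z : Type) (K : seq Z -> Prop) v w :
  K v -> kleene K w -> kleene K (v ++ w).
Proof. by move=> Kv [ws [Kws ->]]; exists (v :: ws); split=> // x /= [<-|/Kws]. Qed.

Lemma kleene_ind (Z : Type) (K P : seq Z -> Prop) :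
    P [::] -> (forall v w, P v -> P w -> P (v ++ w)) -> (forall v, K v -> P v) ->
  forall w, kleene K w -> P w.
Proof.
move=> P0 PD PK w [ws [Kws ->]]; elim: ws Kws => [|v ws IH] Kws //=.
by apply: PD; [apply/PK/Kws; left | apply: IH => x Hx; apply: Kws; right].
Qed.

Section CompletelySimple.

Variables (S : Type) (mul : S -> S -> S).
Hypothesis mulA : associative_op mul.
Local Infix "·" := mul (at level 40, left associativity).

Lemma mul2_ctx a b c : a · b = c -> forall t, t · a · b = t · c.
Proof. by move=> E t; rewrite -mulA E. Qed.

Lemma mul3_ctx a b c d : a · b · c = d -> forall t, t · a · b · c = t · d.
Proof. by move=> E t; rewrite -E !mulA. Qed.

Lemma mul4_ctx a b c d f : a · b · c · d = f -> forall t, t · a · b · c · d = t · f.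
Proof. by move=> E t; rewrite -E !mulA. Qed.

Hypothesis simpleS : sg_simple mul.

Lemma simple_factor a x : exists l r, x = l · a · r.
Proof.
apply: (simpleS (I := fun x => exists l r, x = l · a · r)); split.
  by exists (a · a · a), a, a.
move=> s _ [l [r ->]]; split.
- by exists (s · l), r; rewrite !mulA.
- by exists l, (r · s); rewrite !mulA.
Qed.

Variable e : S.
Hypothesis ee : e · e = e.
Hypothesis e_prim : forall f, f · f = f -> e · f = f -> f · e = f -> f = e.

Definition He x := e · x = x /\ x · e = x.

Lemma He_e : He e. Proof. by split. Qed.

Lemma He_mul x y : He x -> He y -> He (x · y).
Proof. by move=> [ex _] [_ ye]; split; [rewrite mulA ex | rewrite -mulA ye]. Qed.

Lemma He_sandwich x : He (e · x · e).
Proof. by split; [rewrite !mulA ee | rewrite -mulA ee]. Qed.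

(* [q · p] is an idempotent of [eSe], whose only idempotent is [e]. *)
Lemma He_mul_eq_e_sym p q : He p -> He q -> p · q = e -> q · p = e.
Proof.
move=> [ep pe] [eq' qe] pq; apply: e_prim.
- by rewrite mulA (mul2_ctx pq) qe.
- by rewrite mulA eq'.
- by rewrite -mulA pe.
Qed.

Lemma He_inv h : He h -> exists h', He h' /\ h · h' = e /\ h' · h = e.
Proof.
move=> Hh; have [l [r E]] := simple_factor h e.
pose p := e · l · e; pose q := e · r · e.
have phq : p · h · q = e.
  rewrite /p /q !mulA -[e · l · e · h]mulA Hh.1 -[e · l · h · e]mulA Hh.2.
  by rewrite (mul3_ctx (esym E)) !ee.
have Hp : He p := He_sandwich l.
have Hq : He q := He_sandwich r.
exists (q · p); split; first exact: He_mul.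
split.
- rewrite mulA; apply: He_mul_eq_e_sym => //; first exact: He_mul.
  by rewrite mulA.
- rewrite -mulA; apply: He_mul_eq_e_sym => //; exact: He_mul.
Qed.

Lemma He_maximal : maximal_subgroup mul He.
Proof.
split.
  split; first exact: He_mul.
  exists e; split=> //; split; first by move=> h [].
  by move=> h /He_inv [h' [? [? ?]]]; exists h'.
move=> K [Kmul [e' [Ke' [Kid Kinv]]]] HK x Kx.
have [i [Ki [ei ie]]] := Kinv e (HK e He_e).
have e'e : e' · e = e by case: (Kid e (HK e He_e)).
have e'E : e' = e by rewrite -[RHS]e'e -{2}ie -mulA ee ie.
by case: (Kid x Kx); rewrite e'E.
Qed.

Lemma He_inverse_regular x z : He z -> e · x · e · z = e -> z · (e · x · e) = e ->
  x · z · x = x.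
Proof.
move=> Hz xz zx; have [l [r E]] := simple_factor e x.
pose p := e · l · e; pose q := e · r · e.
have exe : e · x · e = p · q by rewrite E /p /q !mulA (mul2_ctx ee).
rewrite exe in xz zx.
have qzp : q · z · p = e.
  rewrite -mulA; apply: He_mul_eq_e_sym; [exact: He_mul Hz (He_sandwich _) |
    exact: He_sandwich | by rewrite -mulA].
have -> : x · z · x = l · (q · z · p) · r.
  by rewrite E /p /q !mulA (mul2_ctx Hz.1) (mul2_ctx Hz.2).
by rewrite qzp E.
Qed.

Variables (G : Type) (mulG : G -> G -> G) (oneG : G) (invG : G -> G).
Hypothesis grpG : is_group mulG oneG invG.

Lemma mulgK g h : mulG (mulG g h) (invG h) = g.
Proof. by rewrite -(grp_assoc grpG) (grp_mulgV grpG) (grp_mulg1 grpG). Qed.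

Lemma mulgKV g h : mulG (mulG g (invG h)) h = g.
Proof. by rewrite -(grp_assoc grpG) (grp_mulV grpG) (grp_mulg1 grpG). Qed.

Variable phi : G -> S.
Hypothesis phiM : forall g h, phi (mulG g h) = phi g · phi h.
Hypothesis phi_inj : injective phi.
Hypothesis phi_He : forall g, He (phi g).
Variable pinv : S -> G.
Hypothesis pinvK : forall h, He h -> phi (pinv h) = h.

Lemma phi1 : phi oneG = e.
Proof.
have := phiM oneG (pinv e).
by rewrite (grp_mul1 grpG) (pinvK He_e) (phi_He _).2 => ->.
Qed.

Lemma phiVg g : phi (invG g) · phi g = e.
Proof. by rewrite -phiM (grp_mulV grpG) phi1. Qed.

Lemma phigV g : phi g · phi (invG g) = e.
Proof. by rewrite -phiM (grp_mulgV grpG) phi1. Qed.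

Definition sinv x := phi (invG (pinv (e · x · e))).

Lemma He_sinv x : He (sinv x). Proof. exact: phi_He. Qed.

Lemma sandwich_sinv x : e · x · e · sinv x = e.
Proof. by rewrite /sinv -{1}(pinvK (He_sandwich x)) phigV. Qed.

Lemma sinv_sandwich x : sinv x · (e · x · e) = e.
Proof. by rewrite /sinv -{2}(pinvK (He_sandwich x)) phiVg. Qed.

Lemma mul_sinv_mul x : x · sinv x · x = x.
Proof. exact: He_inverse_regular (He_sinv x) (sandwich_sinv x) (sinv_sandwich x). Qed.

Lemma e_mul_sinv x : e · x · sinv x = e.
Proof. by rewrite -(He_sinv x).1 mulA sandwich_sinv. Qed.

(* [inL b x] means x ∈ Sb and [inR a x] means x ∈ aS: these are the L-class
   of b and the R-class of a. [rees a b g] is the element of aS ∩ Sb with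
   coordinate [phi g], and [hcoord x b] is the coordinate of x ∈ Sb. *)
Definition inL b x := x · sinv b · b = x.
Definition inR a x := a · sinv a · x = x.

Definition hcoord x b : G := pinv (e · x · sinv b).
Definition rees a b g := a · sinv a · phi g · b.

Lemma inL_refl b : inL b b. Proof. exact: mul_sinv_mul. Qed.

Lemma inR_refl a : inR a a. Proof. exact: mul_sinv_mul. Qed.

Lemma phi_hcoord x b : phi (hcoord x b) = e · x · sinv b.
Proof. by apply: pinvK; split; [rewrite !mulA ee | rewrite -mulA (He_sinv b).2]. Qed.

Lemma inL_mull t b : inL b (t · b).
Proof. exact: mul3_ctx (mul_sinv_mul b) t. Qed.

Lemma inR_rees a b g : inR a (rees a b g).
Proof. by rewrite /inR /rees !mulA mul_sinv_mul. Qed.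

Lemma e_rees a b g : e · rees a b g = phi g · b.
Proof. by rewrite /rees !mulA e_mul_sinv (phi_He g).1. Qed.

Lemma e_rees_sinv a b g : e · rees a b g · sinv b = phi g.
Proof. by rewrite e_rees -{1}(phi_He g).2 (mul3_ctx (e_mul_sinv b)) (phi_He g).2. Qed.

Lemma rees_inj a b g h : rees a b g = rees a b h -> g = h.
Proof. by move=> E; apply: phi_inj; rewrite -(e_rees_sinv a b g) E e_rees_sinv. Qed.

Lemma rees_mulr a b c g : rees a b g · c = rees a (b · c) g.
Proof. by rewrite /rees mulA. Qed.

Lemma rees_relabel a s c g : inL c s -> rees a s g = rees a c (mulG g (hcoord s c)).
Proof.
by move=> Ls; rewrite /rees phiM phi_hcoord !mulA (mul2_ctx (phi_He g).2) (mul3_ctx Ls).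
Qed.

Lemma rees_self a c : inR a c -> rees a c oneG = c.
Proof. by rewrite /rees phi1 (mul2_ctx (He_sinv a).2). Qed.

Lemma rees_coord a b x : inR a x -> inL b x -> x = rees a b (hcoord x b).
Proof. by move=> Rx Lx; rewrite /rees phi_hcoord !mulA (mul2_ctx (He_sinv a).2) Rx Lx. Qed.

Lemma inL_rees a s c g : inL c (rees a s g) -> inL c s.
Proof.
move=> Lr.
have Hs : phi g · s · sinv c · c = phi g · s by rewrite -(e_rees a s g) -{2}Lr !mulA.
have eHs : e · s · sinv c · c = e · s.
  by have := congr1 (mul (phi (invG g))) Hs; rewrite !mulA phiVg.
have Es : s = s · sinv s · e · s by rewrite (mul2_ctx (He_sinv s).2) mul_sinv_mul.
by rewrite /inL {1}Es (mul4_ctx eHs) mulA -Es.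
Qed.

Lemma inR_mulr_cancel a b c x : inL b x -> inR a (x · c) -> inR a x.
Proof.
move=> Lx; rewrite /inR mulA => Rxc.
pose h := hcoord (b · c) c.
have Exc : x · c · sinv c = x · sinv b · phi h.
  by rewrite phi_hcoord !mulA (mul2_ctx (He_sinv b).2) Lx.
have Ex : x = x · c · (sinv c · phi (invG h) · b).
  by rewrite !mulA Exc (mul2_ctx (phigV h)) (mul2_ctx (He_sinv b).2) Lx.
by rewrite {1}Ex !mulA Rxc {2}Ex !mulA.
Qed.

Variables (Y : finType) (gen : Y -> S).
Hypothesis gen_surj : forall x, exists y w, seval mul gen y w = x.
Variables (X : finType) (genX : X -> G) (wordOf : G -> seq X).
Hypothesis wordOfK : forall g, meval mulG oneG genX (wordOf g) = g.

Local Notation ev := (meval mulG oneG genX).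
Local Notation LP := (lpath (mul1 mul) (fun y => Some (gen y))).

Lemma ev_cat u v : ev (u ++ v) = mulG (ev u) (ev v).
Proof.
by apply: meval_cat; [exact: grp_assoc grpG | exact: grp_mul1 grpG | exact: grp_mulg1 grpG].
Qed.

Lemma gen_inL x : exists c, inL (gen c) x.
Proof.
have [y [w <-]] := gen_surj x.
case/lastP: w => [|w c]; first by exists y; exact: inL_refl.
by exists c; rewrite /seval foldl_rcons; exact: inL_mull.
Qed.

(* State [None] is initial and [Some None] final. In state [Some (Some (a, b))]
   the loop started with the letter [a], and the current element is
   [rees (gen a) (gen b) g] for the [g] with [g · (value of the rest of the
   input word) = 1]. *)
Local Notation state := (option (option (Y * Y))).

Inductive istep : Y -> G -> seq (Y + Y) -> Y -> Prop :=
| istep_fwd b c : istep b (hcoord (gen b · gen c) (gen c)) [:: inl c] c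
| istep_relabel s c : inL (gen c) (gen s) -> istep s (hcoord (gen s) (gen c)) [::] c
| istep_bwd b c : istep c (invG (hcoord (gen b · gen c) (gen c))) [:: inr c] b.

Inductive step : state -> seq X -> seq (Y + Y) -> state -> Prop :=
| step_init c : step None [::] [:: inl c] (Some (Some (c, c)))
| step_inner a b h v b' :
    istep b h v b' -> step (Some (Some (a, b))) (wordOf h) v (Some (Some (a, b')))
| step_final a c :
    inR (gen a) (gen c) -> step (Some (Some (a, c))) [::] [:: inr c] (Some None).

Definition edges : seq (state * seq X * seq (Y + Y) * state) :=
  [seq (None, [::], [:: inl c], Some (Some (c, c))) | c <- enum Y] ++
  [seq let: (a, b, c) := t in
       (Some (Some (a, b)), wordOf (hcoord (gen b · gen c) (gen c)), [:: inl c],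
        Some (Some (a, c))) | t <- enum {: Y * Y * Y}] ++
  [seq let: (a, s, c) := t in
       (Some (Some (a, s)), wordOf (hcoord (gen s) (gen c)), [::], Some (Some (a, c)))
     | t <- enum {: Y * Y * Y} & `[< inL (gen t.2) (gen t.1.2) >]] ++
  [seq let: (a, b, c) := t in
       (Some (Some (a, c)), wordOf (invG (hcoord (gen b · gen c) (gen c))), [:: inr c],
        Some (Some (a, b))) | t <- enum {: Y * Y * Y}] ++
  [seq let: (a, c) := t in (Some (Some (a, c)), [::], [:: inr c], Some None)
     | t <- enum {: Y * Y} & `[< inR (gen t.1) (gen t.2) >]].

Lemma edgesP q u v q' : List.In (q, u, v, q') edges <-> step q u v q'.
Proof.
rewrite In_mem !mem_cat; split.
  case/orP=> [|/orP[|/orP[|/orP[]]]].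
  - by case/mapP=> c _ [-> -> -> ->]; constructor.
  - by case/mapP=> [[[a b] c]] _ [-> -> -> ->]; do 2 constructor.
  - case/mapP=> [[[a s] c]]; rewrite mem_filter => /andP[/asboolP Ls _] [-> -> -> ->].
    by do 2 constructor.
  - by case/mapP=> [[[a b] c]] _ [-> -> -> ->]; do 2 constructor.
  - case/mapP=> [[a c]]; rewrite mem_filter => /andP[/asboolP Rac _] [-> -> -> ->].
    by constructor.
case=> [c|a b h v0 b' []|a c Rac].
- by apply/orP; left; apply/mapP; exists c; rewrite ?mem_enum.
- move=> {}b c; apply/orP; right; apply/orP; left.
  by apply/mapP; exists (a, b, c); rewrite ?mem_enum.
- move=> s c Ls; do 2 (apply/orP; right); apply/orP; left.
  by apply/mapP; exists (a, s, c); rewrite // mem_filter mem_enum andbT; apply/asboolP.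
- move=> {}b c; do 3 (apply/orP; right); apply/orP; left.
  by apply/mapP; exists (a, b, c); rewrite ?mem_enum.
- do 4 (apply/orP; right).
  by apply/mapP; exists (a, c); rewrite // mem_filter mem_enum andbT; apply/asboolP.
Qed.

Definition Tr : transducer X (Y + Y) :=
  @Transducer X (Y + Y) state None (fun q => q == Some None) edges.

Local Notation TA := (@taccept X (Y + Y) Tr).

Lemma accept_step q u0 v0 q' u v :
  step q u0 v0 q' -> TA q' u v -> TA q (u0 ++ u) (v0 ++ v).
Proof. by move/edgesP; exact: (@ta_edge X (Y + Y) Tr). Qed.

Lemma accept_stop : TA (Some None) [::] [::].
Proof. exact: ta_final. Qed.

Lemma istep_lpath a b h v b' g : istep b h v b' ->
  LP (Some (rees (gen a) (gen b) g)) v (Some (rees (gen a) (gen b') (mulG g h))).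
Proof.
case=> {b h v b'} [b c|s c Ls|b c].
- apply: lp_fwd; rewrite /= rees_mulr (rees_relabel _ _ (inL_mull _ _)).
  exact: lp_nil.
- by rewrite -(rees_relabel _ _ Ls); exact: lp_nil.
- set h := hcoord _ _.
  have -> : rees (gen a) (gen c) g = rees (gen a) (gen b) (mulG g (invG h)) · gen c.
    by rewrite rees_mulr (rees_relabel _ _ (inL_mull _ _)) mulgKV.
  by apply: (lp_bwd (a := Some _)); exact: lp_nil.
Qed.

Definition returns_to_one (q : state) (u : seq X) (v : seq (Y + Y)) : Prop :=
  match q with
  | None => ev u = oneG -> LP None v None
  | Some None => u = [::] /\ v = [::]
  | Some (Some (a, b)) =>
      forall g, mulG g (ev u) = oneG -> LP (Some (rees (gen a) (gen b) g)) v None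
  end.

Lemma accept_sound q u v : TA q u v -> returns_to_one q u v.
Proof.
elim=> {q u v} [q /eqP -> //|q u0 v0 q' u v /edgesP st _ IH].
case: st IH => [c|a b h v0' b' st|a c Rac] /= IH.
- move=> Hu; apply: lp_fwd; rewrite /= -(rees_self (inR_refl (gen c))).
  by apply: IH; rewrite (grp_mul1 grpG).
- move=> g; rewrite ev_cat wordOfK (grp_assoc grpG) => Hg.
  exact: lpath_cat (istep_lpath a g st) (IH _ Hg).
- case: IH => -> -> g; rewrite (grp_mulg1 grpG) => ->; rewrite rees_self //.
  by apply: (lp_bwd (a := None)); exact: lp_nil.
Qed.

Local Notation Kl := (image_lang (fun u => ev u = oneG) (TA None)).

Definition splits a b g v := exists v1 v2 u,
  [/\ v = v1 ++ v2, kleene Kl v2, TA (Some (Some (a, b))) u v1 & mulG g (ev u) = oneG].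

Lemma splits_inner a b h v0 b' g v :
  istep b h v0 b' -> splits a b' (mulG g h) v -> splits a b g (v0 ++ v).
Proof.
move=> st [v1 [v2 [u [-> Kv2 Acc Hu]]]]; exists (v0 ++ v1), v2, (wordOf h ++ u); split.
- by rewrite catA.
- exact: Kv2.
- exact: accept_step (step_inner a st) Acc.
- by rewrite ev_cat wordOfK (grp_assoc grpG).
Qed.

Lemma kleene_init c w : splits c c oneG w -> kleene Kl (inl c :: w).
Proof.
move=> [v1 [v2 [u [-> Kv2 Acc Hu]]]]; apply: (kleene_cons (v := inl c :: v1)) Kv2.
exists u; split; first by rewrite (grp_mul1 grpG) in Hu.
exact: accept_step (step_init c) Acc.
Qed.

Lemma splits_final a s c g w :
  gen c = rees (gen a) (gen s) g -> kleene Kl w -> splits a s g (inr c :: w).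
Proof.
move=> Ec Kw.
have Rac : inR (gen a) (gen c) by rewrite Ec; exact: inR_rees.
have Ls : inL (gen c) (gen s).
  by apply: (inL_rees (a := gen a) (g := g)); rewrite -Ec; exact: inL_refl.
have Hg : mulG g (hcoord (gen s) (gen c)) = oneG.
  apply: (rees_inj (a := gen a) (b := gen c)).
  by rewrite -(rees_relabel _ _ Ls) -Ec rees_self.
apply: (splits_inner (v0 := [::]) (istep_relabel Ls)); rewrite Hg.
exists [:: inr c], w, [::]; split=> //; last by rewrite (grp_mul1 grpG).
exact: accept_step (step_final Rac) accept_stop.
Qed.

Lemma splits_bwd a s c g w x : x · gen c = rees (gen a) (gen s) g ->
    (forall b g', x = rees (gen a) (gen b) g' -> splits a b g' w) ->
  splits a s g (inr c :: w).
Proof.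
move=> Exc IH; have [b Lx] := gen_inL x.
have Rx : inR (gen a) x.
  by apply: (inR_mulr_cancel (c := gen c) Lx); rewrite Exc; exact: inR_rees.
have Ls : inL (gen c) (gen s).
  by apply: (inL_rees (a := gen a) (g := g)); rewrite -Exc; exact: inL_mull.
set h := hcoord (gen b · gen c) (gen c).
have Ex := rees_coord Rx Lx.
have Eg : mulG (hcoord x (gen b)) h = mulG g (hcoord (gen s) (gen c)).
  apply: (rees_inj (a := gen a) (b := gen c)).
  by rewrite -(rees_relabel _ _ Ls) -(rees_relabel _ _ (inL_mull _ _)) -rees_mulr -Ex.
apply: (splits_inner (v0 := [::]) (istep_relabel Ls)).
apply: (splits_inner (v0 := [:: inr c]) (istep_bwd b c)).
by apply: IH; rewrite {1}Ex -Eg mulgK.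
Qed.

Lemma lpath_splits p v : LP p v None ->
  (p = None -> kleene Kl v) /\
  (forall a b g, p = Some (rees (gen a) (gen b) g) -> splits a b g v).
Proof.
move E : {1}None => q P; elim: P E => {p v q} [p <-|p c w q _ IH Eq|p c w q _ IH Eq].
- by split=> [_|//]; exists [::].
- have [IH1 IH2] := IH Eq; split.
    move=> Ep; subst p; apply: kleene_init; apply: IH2.
    by rewrite /= (rees_self (inR_refl _)).
  move=> a b g Ep; subst p; apply: (splits_inner (v0 := [:: inl c]) (istep_fwd b c)).
  by apply: IH2; rewrite /= rees_mulr (rees_relabel _ _ (inL_mull _ _)).
- have [IH1 IH2] := IH Eq; split; first by case: p {IH IH1 IH2}.
  move=> a s g; case: p {IH} IH1 IH2 => [x|] IH1 IH2 /= [Exc].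
  + exact: splits_bwd Exc (fun b g' Ex => IH2 a b g' (congr1 Some Ex)).
  + exact: splits_final Exc (IH1 erefl).
Qed.

Lemma loop_problem_rational : exists rho, rational_transduction rho /\
  forall w, LP None w None <-> kleene (image_lang (fun u => ev u = oneG) rho) w.
Proof.
exists (TA None); split; first by exists Tr.
move=> w; split=> [P|]; first exact: (lpath_splits P).1.
apply: (kleene_ind (P := fun w => LP None w None)) => [|v v'|v [u [Hu Acc]]].
- exact: lp_nil.
- exact: lpath_cat.
- exact: accept_sound Acc Hu.
Qed.

End CompletelySimple.

Theorem theorem5p5
  (S : Type) (mulS : S -> S -> S) (assocS : associative_op mulS)
  (csS : completely_simple mulS)
  (G : Type) (mulG : G -> G -> G) (oneG : G) (invG : G -> G)
  (grpG : is_group mulG oneG invG)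
  (maxsub_iso : forall H, maximal_subgroup mulS H -> subgroup_iso mulS mulG H)
  (Y : finType) (genY : Y -> S)
  (tau_surj : forall s, exists (y : Y) (w : seq Y), seval mulS genY y w = s)
  (X : finType) (genX : X -> G)
  (sigma_surj : forall g, exists w : seq X, meval mulG oneG genX w = g) :
  let W := fun u : seq X => meval mulG oneG genX u = oneG in
  exists rho : seq X -> seq (Y + Y) -> Prop,
    rational_transduction rho /\
    forall w, L_tau mulS genY w <-> kleene (image_lang W rho) w.
Proof.
move=> W; case: csS => simpleS [e [ee e_prim]].
have [phi [phi_He [phi_onto [phi_inj phiM]]]] :=
  maxsub_iso _ (He_maximal assocS simpleS ee e_prim).
have [pinv pinvK] : {pinv : S -> G & forall h, He mulS e h -> phi (pinv h) = h}.
  apply: (@choice _ _ (fun h g => He mulS e h -> phi g = h)) => h.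
  have [/phi_onto [g <-]|nHe] := pselect (He mulS e h).
    by exists g.
  by exists oneG => /nHe.
have [wordOf wordOfK] := choice sigma_surj.
exact: (loop_problem_rational assocS simpleS ee e_prim grpG phiM phi_inj phi_He pinvK
  tau_surj wordOfK).
Qed.
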